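(* Let $C$ be a kernel configuration. In every $K$-vector space $\mathbb V$ with a $C$-endomorphism $\theta$ which is $C$-image-complete, the following maps are well-defined $K$-linear endomorphisms of $\mathbb V$, each definable by an $L_{K,\theta}$-formula without parameters independent of $(\mathbb V,\theta)$: (1) for every finite $F\subseteq K[X]_{\mathrm{irr}}^{0<C<\infty}$, $\pi_{\mathrm{Im}(F^C)}(x):=$ the unique $u\in\mathrm{Im}(F^C)$ such that $x=u+v$ for some $v\in\mathrm{Ker}(F^C)$; (2) for every finite $F\subseteq K[X]_{\mathrm{irr}}^{0<C<\infty}$, $\pi_{\mathrm{Ker}(F^C)}(x):=$ the unique $v\in\mathrm{Ker}(F^C)$ such that $x=u+v$ for some $u\in\mathrm{Im}(F^C)$ (so $\pi_{\mathrm{Ker}(F^C)}=\mathrm{Id}-\pi_{\mathrm{Im}(F^C)}$); (3) for every monic $\eta\in K[X]$ all of whose monic irreducible factors $f$ satisfy $C(f)<\infty$, $\eta[\theta]^{-1}(x):=$ the unique $u\in\mathrm{Im}(\mathrm{Fac}(\eta)^C)$ with $\eta[\theta](u)=\pi_{\mathrm{Im}(\mathrm{Fac}(\eta)^C)}(x)$.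
   Context: $K$ is a field, $K[X]_{\mathrm{irr}}$ the set of monic irreducible polynomials. $L_{K,\theta}=\{0,+,(q\cdot)_{q\in K},\theta\}$ is the language of $K$-vector spaces with a unary function $\theta$. For $\rho=\sum_i(\rho)_iX^i$, $\rho[\theta]=\sum_i(\rho)_i\theta^i$; $\mathrm{Ker}(\rho),\mathrm{Im}(\rho)$ its kernel and image. A kernel configuration is $C=(c,d)$ with $c:K[X]_{\mathrm{irr}}\to\mathbb N\cup\{\infty\}$, $d\in\mathbb N_{>0}\cup\{\infty\}$, $d=\infty$ or $d=\sum_f\deg(f)c(f)$; $C(f)=c(f)$. $C$ is algebraic if $d<\infty$ (with $\mathrm{MiPo}(C)=\prod_ff^{C(f)}$), transcendental otherwise. $\theta$ is a $C$-endomorphism if $\mathrm{MiPo}(C)[\theta]=0$ (algebraic case), resp. $\mathrm{Ker}(f^{C(f)})=\mathrm{Ker}(f^{C(f)+1})$ for all $f$ with $C(f)<\infty$ (transcendental case). $\theta$ is $C$-image-complete if $\mathrm{Im}(f^{C(f)})=\mathrm{Im}(f^{C(f)+1})$ for all $f$ with $C(f)<\infty$. $K[X]_{\mathrm{irr}}^{0<C<\infty}=\{f:0<C(f)<\infty\}$; for finite $F\subseteq K[X]_{\mathrm{irr}}$ with $C(f)<\infty$ for all $f\in F$, $F^C:=\prod_{f\in F}f^{C(f)}$. $\mathrm{Fac}(\eta)$ is the set of monic irreducible factors of $\eta$. *)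

From HB Require Import structures.
From mathcomp Require Import all_boot all_order all_algebra.
Set Implicit Arguments. Unset Strict Implicit. Unset Printing Implicit Defensive.
Import GRing.Theory.
Local Open Scope ring_scope.

Section Defs.
Variable K : fieldType.

Definition mirr (f : {poly K}) : Prop := f \is monic /\ irreducible_poly f.

(* Kernel configuration C = (c,d); None encodes infinity. *)
Record kconf := KConf { kc_c : {poly K} -> option nat ; kc_d : option nat }.

Definition is_kernel_config (C : kconf) : Prop :=
  match kc_d C with
  | None => True
  | Some d0 => (0 < d0)%N /\
      (* d = sum_f deg(f) c(f), with the (a priori infinite) sum finite *)
      exists s : seq {poly K}, [/\ uniq s, (forall f, f \in s -> mirr f),
        (forall f, mirr f -> f \notin s -> kc_c C f = Some 0%N),
        (forall f, f \in s -> kc_c C f <> None) &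
        (\sum_(f <- s) ((size f).-1 * odflt 0 (kc_c C f)))%N = d0]
  end.

Definition algebraic (C : kconf) : Prop := kc_d C <> None.

Definition peval (V : lmodType K) (th : V -> V) (rho : {poly K}) (x : V) : V :=
  \sum_(i < size rho) rho`_i *: iter i th x.

Definition inKer (V : lmodType K) (th : V -> V) rho (v : V) : Prop :=
  peval th rho v = 0.
Definition inIm (V : lmodType K) (th : V -> V) rho (u : V) : Prop :=
  exists y, u = peval th rho y.

Definition C_endo (C : kconf) (V : lmodType K) (th : V -> V) : Prop :=
  match kc_d C with
  | Some _ => (* MiPo(C)[theta] = 0, MiPo(C) = prod_{f in s} f^C(f) for any
                 duplicate-free list s of elements of K[X]_irr containing
                 every f with C(f) > 0 *)
      forall s : seq {poly K}, uniq s -> (forall f, f \in s -> mirr f) ->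
        (forall f, mirr f -> kc_c C f <> Some 0%N -> f \in s) ->
        forall x, peval th (\prod_(f <- s) f ^+ odflt 0%N (kc_c C f)) x = 0
  | None =>
      forall f n, mirr f -> kc_c C f = Some n ->
        forall x, inKer th (f ^+ n) x <-> inKer th (f ^+ n.+1) x
  end.

Definition C_image_complete (C : kconf) (V : lmodType K) (th : V -> V) : Prop :=
  forall f n, mirr f -> kc_c C f = Some n ->
    forall x, inIm th (f ^+ n) x <-> inIm th (f ^+ n.+1) x.

(* F is a finite subset of K[X]_irr^{0<C<oo}, given as a duplicate-free list *)
Definition good_F (C : kconf) (F : seq {poly K}) : Prop :=
  uniq F /\ forall f, f \in F -> mirr f /\ exists n, kc_c C f = Some n /\ (0 < n)%N.

Definition FC (C : kconf) (F : seq {poly K}) : {poly K} :=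
  \prod_(f <- F) f ^+ odflt 0%N (kc_c C f).

Definition is_Fac (eta : {poly K}) (s : seq {poly K}) : Prop :=
  uniq s /\ forall f, f \in s <-> (mirr f /\ f %| eta).

Inductive term :=
  | TVar of nat
  | TZero
  | TAdd of term & term
  | TScale of K & term
  | TTheta of term.

Inductive formula :=
  | FEq of term & term
  | FNot of formula
  | FAnd of formula & formula
  | FEx of nat & formula.

Fixpoint teval (V : lmodType K) (th : V -> V) (e : nat -> V) (t : term) : V :=
  match t with
  | TVar n => e n
  | TZero => 0
  | TAdd t1 t2 => teval th e t1 + teval th e t2
  | TScale q t1 => q *: teval th e t1
  | TTheta t1 => th (teval th e t1)
  end.

Definition upd (V : Type) (e : nat -> V) (n : nat) (v : V) : nat -> V :=
  fun m => if m == n then v else e m.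

Fixpoint sat (V : lmodType K) (th : V -> V) (e : nat -> V) (phi : formula) : Prop :=
  match phi with
  | FEq t1 t2 => teval th e t1 = teval th e t2
  | FNot p => ~ sat th e p
  | FAnd p q => sat th e p /\ sat th e q
  | FEx n p => exists v, sat th (upd e n v) p
  end.

Definition defines_linear_map (V : lmodType K) (th : V -> V)
    (phi : formula) (R : V -> V -> Prop) : Prop :=
  (exists g : {linear V -> V}, forall x y, R x y <-> y = g x) /\
  (forall e : nat -> V, sat th e phi <-> R (e 0%N) (e 1%N)).

Definition projIm (V : lmodType K) (th : V -> V) P (x u : V) : Prop :=
  inIm th P u /\ exists v, inKer th P v /\ x = u + v.
Definition projKer (V : lmodType K) (th : V -> V) P (x v : V) : Prop :=
  inKer th P v /\ exists u, inIm th P u /\ x = u + v.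

Definition invRel (V : lmodType K) (th : V -> V) P eta (x u : V) : Prop :=
  inIm th P u /\ projIm th P x (peval th eta u).

End Defs.

From Stdlib Require Import ClassicalEpsilon.
From HB Require Import structures.
From mathcomp Require Import all_boot all_order all_algebra.
Import GRing.Theory.
Local Open Scope ring_scope.
Set Implicit Arguments. Unset Strict Implicit.

(* Let P = F^C. For every f in F, Im f^(C(f)+1) = Im f^C(f) by image
   completeness, and Ker f^(C(f)+1) = Ker f^C(f): for transcendental C this is
   the C-endomorphism condition, for algebraic C it follows by Bezout from
   MiPo(C) = f^C(f) Q with f, Q coprime. Hence multiplication by f, and then by
   any polynomial whose irreducible factors lie in F (such as P itself or eta),
   leaves Ker P and Im P unchanged. So V = Im P (+) Ker P and eta[th] is
   bijective on Im P; the three relations are thus graphs of linear maps, and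
   each is defined by writing P[th] and eta[th] out as L_{K,th}-terms. *)

Section PolynomialEvaluation.
Variables (K : fieldType) (V : lmodType K) (th : {linear V -> V}).

Lemma iter_linear i : linear (iter i th).
Proof. by elim: i => [|i IH] a x y //=; rewrite IH linearP. Qed.

Lemma peval_is_linear (p : {poly K}) : linear (peval th p).
Proof.
move=> a x y; rewrite /peval scaler_sumr -big_split /=; apply: eq_bigr => i _.
by rewrite iter_linear scalerDr !scalerA mulrC.
Qed.

HB.instance Definition _ (p : {poly K}) :=
  GRing.isLinear.Build K V V *:%R (peval th p) (peval_is_linear p).

Lemma peval_widen n (p : {poly K}) x : (size p <= n)%N ->
  peval th p x = \sum_(i < n) p`_i *: iter i th x.
Proof.
move=> le_p_n; rewrite /peval (big_ord_widen n (fun i => p`_i *: iter i th x)) //.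
rewrite big_mkcond /=; apply: eq_bigr => i _.
by case: ltnP => // /(nth_default 0) ->; rewrite scale0r.
Qed.

Lemma peval0 x : peval th 0 x = 0.
Proof. by rewrite /peval size_poly0 big_ord0. Qed.

Lemma pevalC c x : peval th c%:P x = c *: x.
Proof. by rewrite (@peval_widen 1) ?size_polyC ?leq_b1 // big_ord1 coefC. Qed.

Lemma peval1 x : peval th 1 x = x.
Proof. by rewrite pevalC scale1r. Qed.

Lemma pevalD (p q : {poly K}) x : peval th (p + q) x = peval th p x + peval th q x.
Proof.
set n := maxn (size p) (size q).
rewrite (@peval_widen n (p + q)); last by rewrite (leq_trans (size_polyD _ _)).
rewrite (@peval_widen n p) ?leq_maxl // (@peval_widen n q) ?leq_maxr //.
by rewrite -big_split /=; apply: eq_bigr => i _; rewrite coefD scalerDl.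
Qed.

Lemma pevalZ c (p : {poly K}) x : peval th (c *: p) x = c *: peval th p x.
Proof.
have [->|c0] := eqVneq c 0; first by rewrite !scale0r peval0.
rewrite /peval size_scale // scaler_sumr; apply: eq_bigr => i _.
by rewrite coefZ scalerA.
Qed.

Lemma peval_comm_th (p : {poly K}) x : th (peval th p x) = peval th p (th x).
Proof.
rewrite /peval linear_sum; apply: eq_bigr => i _.
by rewrite linearZ /= -iterS iterSr.
Qed.

Lemma pevalMX (p : {poly K}) x : peval th (p * 'X) x = peval th p (th x).
Proof.
rewrite (@peval_widen (size p).+1 (p * 'X)); last first.
  by rewrite (leq_trans (size_polyMleq _ _)) // size_polyX addn2.
rewrite big_ord_recl coefMX /= scale0r add0r /peval.
by apply: eq_bigr => i _; rewrite coefMX /= -iterS iterSr.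
Qed.

Lemma pevalM (p q : {poly K}) x : peval th (p * q) x = peval th p (peval th q x).
Proof.
elim/poly_ind: p x => [|p c IH] x; first by rewrite mul0r !peval0.
rewrite mulrDl !pevalD mulrAC !pevalMX IH -peval_comm_th.
by rewrite mul_polyC pevalZ !pevalC.
Qed.

Lemma inIm_lin P a u u' : inIm th P u -> inIm th P u' -> inIm th P (a *: u + u').
Proof. by move=> [y ->] [y' ->]; exists (a *: y + y'); rewrite linearP. Qed.

Lemma inKer_lin P a v v' : inKer th P v -> inKer th P v' -> inKer th P (a *: v + v').
Proof. by rewrite /inKer linearP /= => -> ->; rewrite scaler0 addr0. Qed.

Lemma inImB P u u' : inIm th P u -> inIm th P u' -> inIm th P (u - u').
Proof. by move=> [y ->] [y' ->]; exists (y - y'); rewrite linearB. Qed.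

End PolynomialEvaluation.

Section LinearGraph.
Variables (K : fieldType) (V : lmodType K) (R : V -> V -> Prop).
Hypothesis R_functional : forall x, exists! y, R x y.
Hypothesis R_linear :
  forall a x x' y y', R x y -> R x' y' -> R (a *: x + x') (a *: y + y').

Definition graph_fun (x : V) : V :=
  proj1_sig (constructive_definite_description _ (R_functional x)).

Lemma graph_funP x : R x (graph_fun x).
Proof. by rewrite /graph_fun; case: constructive_definite_description. Qed.

Lemma graph_fun_uniq x y : R x y -> y = graph_fun x.
Proof.
have [z [_ z_uniq]] := R_functional x.
by move=> /z_uniq <-; apply: z_uniq; apply: graph_funP.
Qed.

Lemma graph_fun_is_linear : linear graph_fun.
Proof. by move=> a x x'; apply/esym/graph_fun_uniq/R_linear; apply: graph_funP. Qed.

HB.instance Definition _ :=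
  GRing.isLinear.Build K V V *:%R graph_fun graph_fun_is_linear.

Lemma linear_of_functional_graph :
  exists g : {linear V -> V}, forall x y, R x y <-> y = g x.
Proof.
exists graph_fun => x y; split; first exact: graph_fun_uniq.
by move=> ->; apply: graph_funP.
Qed.

End LinearGraph.

Section KerImStable.
Variables (K : fieldType) (V : lmodType K) (th : {linear V -> V}).

(* The reverse inclusions always hold, so this says Ker(aA) = Ker A and
   Im(aA) = Im A, i.e. a[th] restricts to an automorphism of Im(A[th]). *)
Definition kerim_stable (a A : {poly K}) : Prop :=
  (forall v, inKer th (a * A) v -> inKer th A v) /\
  (forall u, inIm th A u -> inIm th (a * A) u).

Lemma kerim_stable1 A : kerim_stable 1 A.
Proof. by rewrite /kerim_stable mul1r. Qed.

Lemma kerim_stableM a b A :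
  kerim_stable a A -> kerim_stable b A -> kerim_stable (a * b) A.
Proof.
move=> [ker_a im_a] [ker_b im_b]; split=> [v abv|u /im_b [y ->]].
  apply: ker_b; rewrite /inKer mulrC pevalM; apply: ker_a.
  by rewrite /inKer -pevalM -mulrA (mulrC A) mulrA.
have [|z Az] := im_a (peval th A y); first by exists y.
by exists z; rewrite pevalM Az -!pevalM mulrCA mulrA.
Qed.

Lemma kerim_stableX a k A : kerim_stable a A -> kerim_stable (a ^+ k) A.
Proof.
move=> sa; elim: k => [|k IH]; first exact: kerim_stable1.
by rewrite exprS; apply: kerim_stableM.
Qed.

Lemma kerim_stable_prod (I : eqType) (r : seq I) (F : I -> {poly K}) A :
  (forall i, i \in r -> kerim_stable (F i) A) ->
  kerim_stable (\prod_(i <- r) F i) A.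
Proof.
move=> sF; rewrite big_seq; apply: (big_ind (kerim_stable^~ A)).
- exact: kerim_stable1.
- by move=> a b sa sb; exact: (kerim_stableM sa sb).
- by move=> i ri; exact: (sF i ri).
Qed.

Lemma kerim_stableC c A : c != 0 -> kerim_stable c%:P A.
Proof.
move=> c0; split=> [v|u [y ->]].
  by rewrite /inKer pevalM pevalC => /eqP; rewrite scaler_eq0 (negbTE c0) => /eqP.
by exists (c^-1 *: y); rewrite pevalM pevalC linearZ scalerA divff ?scale1r.
Qed.

Lemma kerim_stable_mulr a A B : kerim_stable a A -> kerim_stable a (A * B).
Proof.
move=> [ker_a im_a]; split=> [v|u [y ->]].
  by move=> aABv; rewrite /inKer pevalM; apply: ker_a; rewrite /inKer -pevalM -mulrA.
have [|z Az] := im_a (peval th A y); first by exists y.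
have -> : peval th (A * B) y = peval th B (peval th A y) by rewrite mulrC pevalM.
by exists z; rewrite Az -pevalM mulrCA (mulrC B).
Qed.

Lemma kerim_stable_of_irreducible_divisors A p : p != 0 ->
  (forall d, irreducible_poly d -> d %| p -> kerim_stable d A) ->
  kerim_stable p A.
Proof.
have [n] := ubnP (size p); elim: n p => // n IH p lt_p_n p0 s_div.
have [p_const|p_nonconst] := leqP (size p) 1.
  rewrite (size1_polyC p_const); apply: kerim_stableC.
  by rewrite -polyC_eq0 -(size1_polyC p_const).
have [p_irr|p_red] := classic (irreducible_poly p); first exact: s_div.
have [q [q_n1 q_p q_np]] : exists q : {poly K}, [/\ size q != 1, q %| p & ~~ (q %= p)].
  apply: NNPP => no_q; apply: p_red; split=> [|q q_n1 q_p] //.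
  by apply: NNPP => /negP q_np; apply: no_q; exists q.
have q0 : q != 0 by apply: contraTneq q_p => ->; rewrite dvd0p.
have lt_q_p : (size q < size p)%N.
  by rewrite ltn_neqAle (dvdp_size_eqp q_p) q_np dvdp_leq.
have q_gt1 : (1 < size q)%N by rewrite ltn_neqAle eq_sym q_n1 lt0n size_poly_eq0.
have lt_pq_p : (size (p %/ q)%R < size p)%N.
  rewrite size_divp // ltn_subrL.
  by rewrite -subn1 subn_gt0 q_gt1 (ltn_trans _ p_nonconst).
have pq0 : p %/ q != 0 by rewrite divpN0 // dvdp_leq.
rewrite -(divpK q_p); apply: kerim_stableM; apply: IH.
- exact: leq_trans lt_pq_p lt_p_n.
- exact: pq0.
- by move=> d d_irr d_pq; apply: s_div => //; apply: dvdp_trans d_pq (divp_dvd q_p).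
- exact: leq_trans lt_q_p lt_p_n.
- exact: q0.
- by move=> d d_irr d_q; apply: s_div => //; apply: dvdp_trans q_p.
Qed.

Lemma kerim_stable_Im_inj a A u :
  kerim_stable a A -> inIm th A u -> peval th a u = 0 -> u = 0.
Proof. by move=> [ker_a _] [y ->] auy; apply: ker_a; rewrite /inKer pevalM. Qed.

Lemma kerim_stable_Im_surj a A u : kerim_stable a A -> inIm th A u ->
  exists2 w, inIm th A w & peval th a w = u.
Proof.
by move=> [_ im_a] /im_a [z ->]; exists (peval th A z); [exists z | rewrite pevalM].
Qed.

Lemma ker_pow_succ_coprime (f Q : {poly K}) n :
  coprimep f Q -> (forall x, peval th (f ^+ n * Q) x = 0) ->
  forall v, inKer th (f ^+ n.+1) v -> inKer th (f ^+ n) v.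
Proof.
case/Bezout_eq1_coprimepP=> [[u w] /= Bezout] ann v fv.
rewrite /inKer -[peval th _ v](peval1 th) -Bezout pevalD !pevalM -!pevalM.
rewrite -!mulrA -exprS (mulrC Q) [peval th (u * _) v]pevalM [peval th (w * _) v]pevalM.
by rewrite fv ann !linear0 addr0.
Qed.

End KerImStable.

Section Projections.
Variables (K : fieldType) (V : lmodType K) (th : {linear V -> V}).
Implicit Types (P eta : {poly K}) (x u v w : V).

Lemma projImE P x w : projIm th P x w <-> inIm th P w /\ inKer th P (x - w).
Proof.
split=> [[Pw [v [Pv ->]]]|[Pw Pxw]]; first by rewrite addrC addKr.
by split=> //; exists (x - w); split; rewrite // addrC subrK.
Qed.

Lemma projKer_projIm P x v : projKer th P x v <-> projIm th P x (x - v).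
Proof.
split=> [[Pv [u [Pu ->]]]|[Pxv [v' [Pv' xE]]]].
  by split; [rewrite addrK | exists v; rewrite subrK].
have -> : v = v' by apply: (addrI (x - v)); rewrite -xE subrK.
by split=> //; exists (x - v).
Qed.

Lemma projIm_lin P a x x' u u' : projIm th P x u -> projIm th P x' u' ->
  projIm th P (a *: x + x') (a *: u + u').
Proof.
move=> [Pu [v [Pv ->]]] [Pu' [v' [Pv' ->]]]; split; first exact: inIm_lin.
by exists (a *: v + v'); rewrite scalerDr addrACA; split; first exact: inKer_lin.
Qed.

Lemma projIm_exists_unique P x : kerim_stable th P P -> exists! u, projIm th P x u.
Proof.
move=> sP; have [|u Pu Pu_Px] := kerim_stable_Im_surj sP (u := peval th P x).
  by exists x.
exists u; split=> [|u'].
  by apply/projImE; split=> //; rewrite /inKer linearB /= Pu_Px subrr.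
move=> /projImE[[y' ->] Px_y']; apply/esym/eqP; rewrite -subr_eq0; apply/eqP.
apply: (kerim_stable_Im_inj sP); first by apply: inImB => //; exists y'.
move: Px_y'; rewrite /inKer !linearB /= Pu_Px => /eqP; rewrite subr_eq0 => /eqP ->.
exact: subrr.
Qed.

Lemma projIm_linear P : kerim_stable th P P ->
  exists g : {linear V -> V}, forall x y, projIm th P x y <-> y = g x.
Proof.
move=> sP; apply: linear_of_functional_graph; last exact: projIm_lin.
by move=> x; apply: projIm_exists_unique.
Qed.

Lemma projKer_linear P : kerim_stable th P P ->
  exists g : {linear V -> V}, forall x y, projKer th P x y <-> y = g x.
Proof.
move=> sP; apply: linear_of_functional_graph => [x|a x x' v v'].
  have [u [Pu u_uniq]] := projIm_exists_unique x sP.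
  exists (x - u); split=> [|v /projKer_projIm /u_uniq ->].
    by apply/projKer_projIm; rewrite opprB addrC subrK.
  by rewrite opprB addrC subrK.
move=> /projKer_projIm Pv /projKer_projIm Pv'; apply/projKer_projIm.
by have := projIm_lin a Pv Pv'; rewrite scalerBr opprD addrACA.
Qed.

Lemma invRel_exists_unique P eta x :
  kerim_stable th P P -> kerim_stable th eta P -> exists! u, invRel th P eta x u.
Proof.
move=> sP seta; have [w [Pw w_uniq]] := projIm_exists_unique x sP.
have [u Pu eta_u] := kerim_stable_Im_surj seta Pw.1.
exists u; split=> [|u' [Pu' /w_uniq eta_u']]; first by split; rewrite // eta_u.
apply/esym/eqP; rewrite -subr_eq0; apply/eqP.
apply: (kerim_stable_Im_inj seta); first exact: inImB.
by rewrite linearB /= eta_u eta_u' subrr.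
Qed.

Lemma invRel_linear P eta : kerim_stable th P P -> kerim_stable th eta P ->
  exists g : {linear V -> V}, forall x y, invRel th P eta x y <-> y = g x.
Proof.
move=> sP seta; apply: linear_of_functional_graph => [x|a x x' u u'].
  exact: invRel_exists_unique.
move=> [Pu Pxu] [Pu' Pxu'].
by split; [apply: inIm_lin | rewrite linearP; apply: projIm_lin].
Qed.

End Projections.

Section Formulas.
Variable K : fieldType.

Fixpoint iter_term n (t : term K) : term K :=
  if n is n'.+1 then TTheta (iter_term n' t) else t.

Definition poly_term (p : {poly K}) (t : term K) : term K :=
  foldr (fun i acc => TAdd (TScale p`_i (iter_term i t)) acc) (TZero K)
    (iota 0 (size p)).

Definition sub_term (t1 t2 : term K) : term K := TAdd t1 (TScale (-1) t2).

(* Variable 2 is bound here, so [t] must not mention it. *)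
Definition im_formula P t : formula K := FEx 2 (FEq t (poly_term P (TVar K 2))).

Definition projIm_formula P : formula K :=
  FAnd (im_formula P (TVar K 1))
       (FEq (poly_term P (sub_term (TVar K 0) (TVar K 1))) (TZero K)).

Definition projKer_formula P : formula K :=
  FAnd (FEq (poly_term P (TVar K 1)) (TZero K))
       (FEx 2 (FEq (TVar K 0) (TAdd (poly_term P (TVar K 2)) (TVar K 1)))).

Definition invRel_formula P eta : formula K :=
  FAnd (im_formula P (TVar K 1))
    (FAnd (im_formula P (poly_term eta (TVar K 1)))
          (FEq (poly_term P (sub_term (TVar K 0) (poly_term eta (TVar K 1)))) (TZero K))).

Variables (V : lmodType K) (th : {linear V -> V}).

Lemma teval_iter_term e n t : teval th e (iter_term n t) = iter n th (teval th e t).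
Proof. by elim: n => //= n ->. Qed.

Lemma teval_poly_term e p t : teval th e (poly_term p t) = peval th p (teval th e t).
Proof.
rewrite /peval -(big_mkord xpredT (fun i => p`_i *: iter i th (teval th e t))).
rewrite /index_iota subn0 /poly_term.
elim: (iota 0 _) => [|i r IH] /=; first by rewrite big_nil.
by rewrite big_cons IH teval_iter_term.
Qed.

Lemma teval_sub_term e t1 t2 :
  teval th e (sub_term t1 t2) = teval th e t1 - teval th e t2.
Proof. by rewrite /= scaleN1r. Qed.

Lemma sat_im_formula P t e : (forall v, teval th (upd e 2 v) t = teval th e t) ->
  sat th e (im_formula P t) <-> inIm th P (teval th e t).
Proof.
move=> t_indep; rewrite /im_formula /=; split=> -[y].
  by rewrite teval_poly_term t_indep => ->; exists y.
by move=> tE; exists y; rewrite teval_poly_term t_indep.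
Qed.

Lemma sat_projIm_formula P e :
  sat th e (projIm_formula P) <-> projIm th P (e 0%N) (e 1%N).
Proof.
have imE := @sat_im_formula P (TVar K 1) e (fun _ => erefl).
rewrite projImE /inKer; split=> -[Pu Pxu]; split; try exact/imE.
- by move: Pxu => /=; rewrite teval_poly_term teval_sub_term.
- by rewrite /= teval_poly_term teval_sub_term.
Qed.

Lemma sat_projKer_formula P e :
  sat th e (projKer_formula P) <-> projKer th P (e 0%N) (e 1%N).
Proof.
rewrite /= teval_poly_term; split=> -[Pv].
  case=> y; rewrite teval_poly_term => xE.
  by split=> //; exists (peval th P y); split=> //; exists y.
by case=> u [[y ->] xE]; split=> //; exists y; rewrite teval_poly_term.
Qed.

Lemma sat_invRel_formula P eta e :
  sat th e (invRel_formula P eta) <-> invRel th P eta (e 0%N) (e 1%N).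
Proof.
have imE := @sat_im_formula P (TVar K 1) e (fun _ => erefl).
have etaE : sat th e (im_formula P (poly_term eta (TVar K 1))) <->
            inIm th P (peval th eta (e 1%N)).
  by rewrite sat_im_formula ?teval_poly_term // => v; rewrite !teval_poly_term.
rewrite /invRel projImE /inKer.
split=> -[Pu [Peta Px]]; do !split; try exact/imE; try exact/etaE.
- by move: Px => /=; rewrite !teval_poly_term teval_sub_term teval_poly_term.
- by rewrite /= !teval_poly_term teval_sub_term teval_poly_term.
Qed.

End Formulas.

Section Irreducibles.
Variable K : fieldType.

Lemma coprimep_mirr (f g : {poly K}) : mirr f -> mirr g -> f != g -> coprimep f g.
Proof.
move=> [f_monic f_irr] [g_monic g_irr] fg; rewrite irreducible_poly_coprime //.
apply: contra fg => /(apply_irredp g_irr); rewrite -eqp_monic //.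
by apply; rewrite neq_ltn f_irr.1 orbT.
Qed.

Lemma coprimep_mirr_prod f (s : seq {poly K}) (k : {poly K} -> nat) :
  mirr f -> (forall g, g \in s -> mirr g /\ g != f) ->
  coprimep f (\prod_(g <- s) g ^+ k g).
Proof.
move=> mf s_mirr; rewrite big_seq; apply: (big_ind (coprimep f)).
- exact: coprimep1.
- by move=> p q fp fq; rewrite coprimepMr fp.
- move=> g /s_mirr[mg gf]; apply: coprimep_expr.
  by apply: coprimep_mirr; rewrite // eq_sym.
Qed.

Lemma prod_mirr_coprime_split f (s : seq {poly K}) (k : {poly K} -> nat) :
  uniq s -> (forall g, g \in s -> mirr g) -> mirr f -> (f \notin s -> k f = 0%N) ->
  exists2 Q, \prod_(g <- s) g ^+ k g = f ^+ k f * Q & coprimep f Q.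
Proof.
move=> s_uniq s_mirr mf k_f; have [fs|fs] := boolP (f \in s).
  exists (\prod_(g <- rem f s) g ^+ k g); first by rewrite (big_rem f fs).
  apply: coprimep_mirr_prod => // g; rewrite (mem_rem_uniq f s_uniq) inE.
  by case/andP=> gf /s_mirr.
exists (\prod_(g <- s) g ^+ k g); first by rewrite k_f // mul1r.
apply: coprimep_mirr_prod => // g gs; split; first exact: s_mirr.
by apply: contraNneq fs => <-.
Qed.

Lemma mirr_normalize (d : {poly K}) : irreducible_poly d ->
  mirr ((lead_coef d)^-1 *: d).
Proof.
move=> d_irr; have ld0 : lead_coef d != 0 by rewrite lead_coef_eq0 irredp_neq0.
have ldV0 : (lead_coef d)^-1 != 0 by rewrite invr_eq0.
split; first by rewrite monicE lead_coefZ mulVf.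
split; first by rewrite size_scale //; exact: d_irr.1.
move=> q q_n1; rewrite dvdpZr // => /(apply_irredp d_irr q_n1) q_d.
by apply: eqp_trans q_d _; rewrite eqp_sym eqp_scale.
Qed.

End Irreducibles.

Section Configuration.
Variables (K : fieldType) (C : kconf K) (V : lmodType K) (th : {linear V -> V}).
Hypotheses (C_config : is_kernel_config C) (th_endo : C_endo C th)
  (th_image_complete : C_image_complete C th).

Lemma ker_irr_pow_succ f n : mirr f -> kc_c C f = Some n ->
  forall v, inKer th (f ^+ n.+1) v -> inKer th (f ^+ n) v.
Proof.
move=> mf Cf; move: th_endo C_config; rewrite /C_endo /is_kernel_config.
case: (kc_d C) => [d|] endo; last by move=> _ v /(endo f n mf Cf).
move=> [_ [s [s_uniq s_mirr s_zero _ _]]].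
have s_supp g : mirr g -> kc_c C g <> Some 0%N -> g \in s.
  by move=> mg; apply: contra_notT => /(s_zero g mg).
have [|Q MiPoE fQ] := prod_mirr_coprime_split
    (k := fun g => odflt 0%N (kc_c C g)) s_uniq s_mirr mf.
  by move=> /(s_zero f mf) ->.
apply: (ker_pow_succ_coprime fQ) => x.
by rewrite -[n]/(odflt 0%N (Some n)) -Cf -MiPoE (endo s s_uniq s_mirr s_supp).
Qed.

Lemma kerim_stable_irr_pow f n : mirr f -> kc_c C f = Some n ->
  kerim_stable th f (f ^+ n).
Proof.
move=> mf Cf; rewrite /kerim_stable -exprS; split; first exact: ker_irr_pow_succ.
by move=> u /(th_image_complete mf Cf u).
Qed.

Lemma kerim_stable_FC_factor F f : f \in F -> mirr f -> kc_c C f <> None ->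
  kerim_stable th f (FC C F).
Proof.
move=> fF mf; case Cf: (kc_c C f) => [n|] // _.
rewrite /FC (big_rem f fF) /= Cf; apply: kerim_stable_mulr.
exact: kerim_stable_irr_pow.
Qed.

Lemma kerim_stable_FC F : (forall g, g \in F -> mirr g /\ kc_c C g <> None) ->
  kerim_stable th (FC C F) (FC C F).
Proof.
move=> F_fin; apply: kerim_stable_prod => f fF.
by have [mf Cf] := F_fin f fF; apply/kerim_stableX/kerim_stable_FC_factor.
Qed.

Lemma kerim_stable_Fac eta s : eta != 0 -> is_Fac eta s ->
  (forall f, f \in s -> kc_c C f <> None) -> kerim_stable th eta (FC C s).
Proof.
move=> eta0 [_ s_Fac] s_fin.
apply: kerim_stable_of_irreducible_divisors => // d d_irr d_eta.
have ld0 : lead_coef d != 0 by rewrite lead_coef_eq0 irredp_neq0.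
have -> : d = (lead_coef d)%:P * ((lead_coef d)^-1 *: d).
  by rewrite mul_polyC scalerA divff // scale1r.
apply: kerim_stableM; first exact: kerim_stableC.
have sd : (lead_coef d)^-1 *: d \in s.
  by apply/s_Fac; split; [exact: mirr_normalize | rewrite dvdpZl // invr_eq0].
by apply: (kerim_stable_FC_factor sd); [exact: mirr_normalize | exact: s_fin].
Qed.

End Configuration.

Unset Implicit Arguments. Set Strict Implicit.

Theorem theorem3p15 (K : fieldType) (C : kconf K) (hC : is_kernel_config C) :
  (* (1) *)
  (forall F : seq {poly K}, good_F C F ->
     exists phi : formula K, forall (V : lmodType K) (th : {linear V -> V}),
       C_endo C th -> C_image_complete C th ->
       defines_linear_map th phi (projIm th (FC C F))) /\
  (* (2) *)
  (forall F : seq {poly K}, good_F C F ->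
     exists phi : formula K, forall (V : lmodType K) (th : {linear V -> V}),
       C_endo C th -> C_image_complete C th ->
       defines_linear_map th phi (projKer th (FC C F))) /\
  (* (3) *)
  (forall (eta : {poly K}) (s : seq {poly K}),
     eta \is monic -> (forall f, mirr f -> f %| eta -> kc_c C f <> None) ->
     is_Fac eta s ->
     exists phi : formula K, forall (V : lmodType K) (th : {linear V -> V}),
       C_endo C th -> C_image_complete C th ->
       (forall x, exists! w, projIm th (FC C s) x w) /\
       defines_linear_map th phi (invRel th (FC C s) eta)).
Proof.
have good_fin F : good_F C F -> forall g, g \in F -> mirr g /\ kc_c C g <> None.
  by move=> [_ F_good] g /F_good[mg [n [-> _]]].
split; [|split].
- move=> F /good_fin F_fin; exists (projIm_formula (FC C F)) => V th endo imc.
  split; last exact: sat_projIm_formula.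
  exact/projIm_linear/(kerim_stable_FC hC endo imc F_fin).
- move=> F /good_fin F_fin; exists (projKer_formula (FC C F)) => V th endo imc.
  split; last exact: sat_projKer_formula.
  exact/projKer_linear/(kerim_stable_FC hC endo imc F_fin).
- move=> eta s eta_monic eta_fin s_Fac.
  exists (invRel_formula (FC C s) eta) => V th endo imc.
  have s_fin f : f \in s -> mirr f /\ kc_c C f <> None.
    by move=> /s_Fac.2[mf f_eta]; split; last exact: eta_fin.
  have sP := kerim_stable_FC hC endo imc s_fin.
  have seta : kerim_stable th eta (FC C s).
    apply: (kerim_stable_Fac hC endo imc (monic_neq0 eta_monic) s_Fac).
    by move=> f /s_fin[].
  split; first by move=> x; exact: projIm_exists_unique.
  split; [exact: invRel_linear | exact: sat_invRel_formula].
Qed.
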